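(* Let $M$ be a completely metrizable space with a compatible metric. Suppose that for every $\varepsilon>0$ there exist a Krasinkiewicz space $Z_\varepsilon$ and maps $r\colon M\to Z_\varepsilon$ and $\phi\colon Z_\varepsilon\to M$ such that $\phi$ is light and $\phi\circ r$ is $\varepsilon$-close to the identity of $M$ (i.e. $\operatorname{dist}(\phi(r(x)),x)<\varepsilon$ for all $x\in M$). Then $M$ is a Krasinkiewicz space.
   Context: A map is light if all its fibers are zero-dimensional (equivalently, for compact fibers, totally disconnected). For a compact metrizable $X$, a map $g\colon X\to M$ is Krasinkiewicz if every subcontinuum of $X$ is either contained in a fiber of $g$ or contains a component of some fiber of $g$; a metrizable space $M$ is a Krasinkiewicz space if for every compact metrizable $X$ the Krasinkiewicz maps are dense in $C(X,M)$ with the uniform topology. *)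

From Stdlib Require Import Reals List.
Open Scope R_scope.

Definition is_metric {T : Type} (m : T -> T -> R) : Prop :=
  (forall x y, 0 <= m x y) /\
  (forall x y, m x y = 0 <-> x = y) /\
  (forall x y, m x y = m y x) /\
  (forall x y z, m x z <= m x y + m y z).

Record MetricSpace := {
  carrier :> Type;
  mdist : carrier -> carrier -> R;
  mdist_metric : is_metric mdist
}.
Arguments mdist {m} _ _.

Section Topology.
Context {X : MetricSpace}.

Definition open_wrt (m : X -> X -> R) (U : X -> Prop) : Prop :=
  forall x, U x -> exists e, 0 < e /\ forall y, m x y < e -> U y.

Definition open (U : X -> Prop) : Prop := open_wrt mdist U.
Definition closed (F : X -> Prop) : Prop := open (fun x => ~ F x).

Definition subset (A B : X -> Prop) : Prop := forall x, A x -> B x.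

Definition rel_open (A B : X -> Prop) : Prop :=
  subset B A /\ exists U, open U /\ forall x, A x -> (B x <-> U x).
Definition rel_closed (A B : X -> Prop) : Prop :=
  subset B A /\ exists F, closed F /\ forall x, A x -> (B x <-> F x).

Definition compact (K : X -> Prop) : Prop :=
  forall (I : Type) (U : I -> X -> Prop),
    (forall i, open (U i)) ->
    (forall x, K x -> exists i, U i x) ->
    exists l : list I, forall x, K x -> exists i, In i l /\ U i x.

Definition connected (S : X -> Prop) : Prop :=
  forall U V : X -> Prop, open U -> open V ->
    (forall x, S x -> U x \/ V x) ->
    (forall x, S x -> U x -> V x -> False) ->
    subset S U \/ subset S V.

Definition subcontinuum (K : X -> Prop) : Prop :=
  (exists x, K x) /\ compact K /\ connected K.

Definition component (S : X -> Prop) (x : X) : X -> Prop :=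
  fun y => exists C, connected C /\ subset C S /\ C x /\ C y.

(* covering dimension <= 0 for a metrizable subspace A (dim = Ind here):
   any two disjoint closed subsets are separated by a clopen set. *)
Definition zero_dimensional (A : X -> Prop) : Prop :=
  forall B C, rel_closed A B -> rel_closed A C ->
    (forall x, B x -> C x -> False) ->
    exists W, rel_open A W /\ rel_closed A W /\
      subset B W /\ (forall x, W x -> C x -> False).

Definition complete_wrt (m : X -> X -> R) : Prop :=
  forall u : nat -> X,
    (forall e, 0 < e -> exists N, forall p q, (N <= p)%nat -> (N <= q)%nat -> m (u p) (u q) < e) ->
    exists l, forall e, 0 < e -> exists N, forall n, (N <= n)%nat -> m (u n) l < e.

End Topology.

Definition completely_metrizable (M : MetricSpace) : Prop :=
  exists m : M -> M -> R, is_metric m /\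
    (forall U : M -> Prop, open U <-> open_wrt m U) /\ complete_wrt m.

Definition continuous {X Y : MetricSpace} (f : X -> Y) : Prop :=
  forall x e, 0 < e -> exists d, 0 < d /\
    forall y, mdist x y < d -> mdist (f x) (f y) < e.

Definition fiber {X Y : MetricSpace} (f : X -> Y) (y : Y) : X -> Prop :=
  fun x => f x = y.

Definition light {X Y : MetricSpace} (f : X -> Y) : Prop :=
  forall y, zero_dimensional (fiber f y).

Definition krasinkiewicz_map {X M : MetricSpace} (g : X -> M) : Prop :=
  forall K : X -> Prop, subcontinuum K ->
    (exists y, subset K (fiber g y)) \/
    (exists y x, fiber g y x /\ subset (component (fiber g y) x) K).

(* Krasinkiewicz space: for every compact metrizable X, Krasinkiewicz maps are
   dense in C(X,M) with the uniform (sup-metric) topology. *)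
Definition krasinkiewicz_space (M : MetricSpace) : Prop :=
  forall (X : MetricSpace), compact (fun _ : X => True) ->
  forall f : X -> M, continuous f ->
  forall e, 0 < e ->
    exists g : X -> M, continuous g /\ krasinkiewicz_map g /\
      forall x, mdist (f x) (g x) < e.

(* Given a compact metric X, a map f : X -> M and e > 0, choose Z, r, phi
   for e/2.  Uniform continuity of phi near the compact set r(f(X)) gives
   d > 0 such that d-close points of Z, one of them in r(f(X)), have
   e/2-close images under phi.  As Z is a Krasinkiewicz space there is a
   Krasinkiewicz map h : X -> Z that is d-close to r o f; then phi o h is
   e-close to f.  It remains that phi o h is a Krasinkiewicz map: since phi
   is light, a connected set on which phi o h is constant is mapped by h
   into a zero-dimensional fiber of phi, hence to a single point, so the
   fiber components of phi o h are contained in fiber components of h. *)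

From Pilot Require Import Defs.
From Stdlib Require Import Reals Lra List Classical ClassicalEpsilon.
Open Scope R_scope.

Lemma dist_nonneg (T : MetricSpace) (x y : T) : 0 <= mdist x y.
Proof. destruct (mdist_metric T) as [H _]. apply H. Qed.

Lemma dist_eq0 (T : MetricSpace) (x y : T) : mdist x y = 0 <-> x = y.
Proof. destruct (mdist_metric T) as [_ [H _]]. apply H. Qed.

Lemma dist_sym (T : MetricSpace) (x y : T) : mdist x y = mdist y x.
Proof. destruct (mdist_metric T) as [_ [_ [H _]]]. apply H. Qed.

Lemma dist_triangle (T : MetricSpace) (x y z : T) :
  mdist x z <= mdist x y + mdist y z.
Proof. destruct (mdist_metric T) as [_ [_ [_ H]]]. apply H. Qed.

Lemma dist_refl (T : MetricSpace) (x : T) : mdist x x = 0.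
Proof. apply dist_eq0. reflexivity. Qed.

Lemma continuous_comp (X Y W : MetricSpace) (f : X -> Y) (g : Y -> W) :
  continuous f -> continuous g -> continuous (fun x => g (f x)).
Proof.
  intros Hf Hg x e He.
  destruct (Hg (f x) e He) as [d1 [Hd1 H1]].
  destruct (Hf x d1 Hd1) as [d2 [Hd2 H2]].
  exists d2; split; auto.
Qed.

Lemma open_preimage (X Y : MetricSpace) (h : X -> Y) (U : Y -> Prop) :
  continuous h -> open U -> open (fun x => U (h x)).
Proof.
  intros Hh HU x Hx.
  destruct (HU (h x) Hx) as [e [He HeU]].
  destruct (Hh x e He) as [d [Hd Hd']].
  exists d; split; auto.
Qed.

Lemma closed_singleton (T : MetricSpace) (p : T) : closed (fun z => z = p).
Proof.
  intros z Hz. exists (mdist p z). split.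
  - destruct (dist_nonneg T p z) as [H | H]; auto.
    exfalso; apply Hz. symmetry. apply dist_eq0. auto.
  - intros y Hy Hyp. subst y. rewrite dist_sym in Hy. lra.
Qed.

Lemma rel_closed_singleton (T : MetricSpace) (A : T -> Prop) (p : T) :
  A p -> rel_closed A (fun z => z = p).
Proof.
  intros Ap. split.
  - intros z ->. exact Ap.
  - exists (fun z => z = p). split; [apply closed_singleton | tauto].
Qed.

(* A continuous map sending a connected set D into a zero-dimensional set A
   is constant on D: two distinct values would be separated by a clopen
   subset of A, whose traces would disconnect D. *)
Lemma connected_into_zero_dim_constant (X Z : MetricSpace) (h : X -> Z)
  (A : Z -> Prop) (D : X -> Prop) :
  continuous h -> zero_dimensional A -> connected D ->
  (forall d, D d -> A (h d)) ->
  forall a b, D a -> D b -> h a = h b.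
Proof.
  intros Hh HA HD HDA a b Da Db.
  apply NNPP; intro hab.
  destruct (HA (fun z => z = h a) (fun z => z = h b)) as
    [W [[_ [U [HU HWU]]] [[_ [F [HF HWF]]] [HaW HWb]]]].
  - apply rel_closed_singleton. auto.
  - apply rel_closed_singleton. auto.
  - intros z -> E. auto.
  - (* D is covered by the disjoint open sets h^-1(U) and h^-1(~F). *)
    destruct (HD (fun x => U (h x)) (fun x => ~ F (h x))) as [S | S].
    + apply open_preimage; auto.
    + apply (open_preimage X Z h (fun z => ~ F z)); auto.
    + intros d Dd. destruct (classic (W (h d))) as [Wd | Wd].
      * left. apply (HWU _ (HDA d Dd)). auto.
      * right. intro Fd. apply Wd. apply (HWF _ (HDA d Dd)). auto.
    + intros d Dd Ud nFd. apply nFd.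
      apply (HWF _ (HDA d Dd)). apply (HWU _ (HDA d Dd)). auto.
    + assert (Wb : W (h b)) by (apply (HWU _ (HDA b Db)); apply S; auto).
      eapply HWb; eauto.
    + apply (S a Da). apply (HWF _ (HDA a Da)). apply HaW. reflexivity.
Qed.

(* Composing a Krasinkiewicz map with a light map gives a Krasinkiewicz
   map: a fiber component of phi o h lies inside a fiber of h, hence inside
   the fiber component of h through the same point. *)
Lemma krasinkiewicz_comp_light (X Z M : MetricSpace) (h : X -> Z)
  (phi : Z -> M) :
  continuous h -> light phi -> krasinkiewicz_map h ->
  krasinkiewicz_map (fun x => phi (h x)).
Proof.
  intros Hh Hl Hk K HK.
  destruct (Hk K HK) as [[y Hy] | [y [x [Hx Hc]]]].
  - left. exists (phi y). intros z Kz. unfold fiber in *. rewrite (Hy z Kz). auto.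
  - right. exists (phi y), x. split.
    + unfold fiber in *. rewrite Hx. auto.
    + intros x' [D [HD [HDfib [Dx Dx']]]]. apply Hc.
      exists D. repeat split; auto.
      intros d Dd. unfold fiber in *. rewrite <- Hx.
      apply (connected_into_zero_dim_constant X Z h (fiber phi (phi y)) D
               Hh (Hl _) HD); auto.
Qed.

Fixpoint list_min (l : list R) : R :=
  match l with nil => 1 | a :: t => Rmin a (list_min t) end.

Lemma list_min_pos (l : list R) : (forall a, In a l -> 0 < a) -> 0 < list_min l.
Proof.
  induction l as [| a l IH]; simpl; intros H; [lra |].
  apply Rmin_glb_lt; auto.
Qed.

Lemma list_min_le (l : list R) (a : R) : In a l -> list_min l <= a.
Proof.
  induction l as [| b l IH]; simpl; intros H; [contradiction |].
  destruct H as [-> | H]; [apply Rmin_l |].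
  eapply Rle_trans; [apply Rmin_r | auto].
Qed.

(* Cover X by the sets where k lies within half the
   continuity radius of phi at some k i, and take the least half-radius of
   a finite subcover. *)
Lemma uniform_continuity_near_compact_image (X Z M : MetricSpace)
  (k : X -> Z) (phi : Z -> M) :
  Defs.compact (fun _ : X => True) -> continuous k -> continuous phi ->
  forall e, 0 < e -> exists d, 0 < d /\
    forall x z, mdist (k x) z < d -> mdist (phi (k x)) (phi z) < e.
Proof.
  intros HX Hk Hp e He.
  assert (Hrad : forall i : X, exists r, 0 < r /\
     forall z, mdist (k i) z < r -> mdist (phi (k i)) (phi z) < e / 2).
  { intro i. apply Hp. lra. }
  apply choice in Hrad. destruct Hrad as [rad Hrad].
  destruct (HX X (fun i x => mdist (k i) (k x) < rad i / 2)) as [l Hl].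
  - intros i x Hx.
    destruct (Hk x (rad i / 2 - mdist (k i) (k x))) as [d [Hd Hd']]; [lra |].
    exists d; split; auto. intros y Hy. specialize (Hd' y Hy).
    pose proof (dist_triangle Z (k i) (k x) (k y)). lra.
  - intros x _. exists x. rewrite dist_refl. destruct (Hrad x). lra.
  - exists (list_min (map (fun i => rad i / 2) l)). split.
    + apply list_min_pos. intros a Ha. apply in_map_iff in Ha.
      destruct Ha as [i [<- _]]. destruct (Hrad i). lra.
    + intros x z Hxz. destruct (Hl x I) as [i [Hi Hix]].
      assert (Hmin : list_min (map (fun i => rad i / 2) l) <= rad i / 2).
      { apply list_min_le. apply in_map_iff. exists i. auto. }
      destruct (Hrad i) as [Hpos Hc].
      assert (Hz : mdist (phi (k i)) (phi z) < e / 2).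
      { apply Hc. pose proof (dist_triangle Z (k i) (k x) z). lra. }
      assert (Hx : mdist (phi (k i)) (phi (k x)) < e / 2) by (apply Hc; lra).
      pose proof (dist_triangle M (phi (k x)) (phi (k i)) (phi z)).
      rewrite (dist_sym M (phi (k x)) (phi (k i))) in *. lra.
Qed.

Theorem proposition3p3 (M : MetricSpace) :
  completely_metrizable M ->
  (forall eps, 0 < eps ->
     exists (Z : MetricSpace) (r : M -> Z) (phi : Z -> M),
       krasinkiewicz_space Z /\ continuous r /\ continuous phi /\
       light phi /\ forall x, mdist (phi (r x)) x < eps) ->
  krasinkiewicz_space M.
Proof.
  intros _ Happrox X HX f Hf e He.
  destruct (Happrox (e / 2)) as [Z [r [phi [KZ [Hr [Hphi [Hlight Hclose]]]]]]];
    [lra |].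
  assert (Hrf : continuous (fun x => r (f x))) by (apply continuous_comp; auto).
  destruct (uniform_continuity_near_compact_image X Z M (fun x => r (f x)) phi
              HX Hrf Hphi (e / 2)) as [d [Hd Hunif]]; [lra |].
  destruct (KZ X HX (fun x => r (f x)) Hrf d Hd) as [h [Hh [Hkh Hhd]]].
  exists (fun x => phi (h x)). split; [| split].
  - apply continuous_comp; auto.
  - apply krasinkiewicz_comp_light; auto.
  - intro x.
    pose proof (Hunif x (h x) (Hhd x)) as Hphi_h.
    pose proof (Hclose (f x)) as Hphi_r.
    pose proof (dist_triangle M (f x) (phi (r (f x))) (phi (h x))).
    rewrite (dist_sym M (f x) (phi (r (f x)))) in *. lra.
Qed.
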